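(* Let $s_\mathrm{in}>0$, let $\mu:[0,s_\mathrm{in}]\to[0,\infty)$ be continuously differentiable with $\mu(0)=0$, fix $\bar s\in(0,s_\mathrm{in})$ and numbers $0<D_{\min}<\mu(\bar s)<D_{\max}$. Consider the chemostat $\dot s=-\mu(s)b+D(s_\mathrm{in}-s)$, $\dot b=\mu(s)b-Db$ with the dynamic feedback $$D=\operatorname{sat}_{[D_{\min},D_{\max}]}\big(\bar D-G_1(s-\bar s)\big),\qquad \frac{d}{dt}\bar D=-G_2(s-\bar s)(\bar D-D_{\min})(D_{\max}-\bar D).$$ Then for any constants $G_1>0$, $G_2>0$ with $G_1>-\mu'(\bar s)$, the equilibrium $(s,b,\bar D)=(\bar s,\,s_\mathrm{in}-\bar s,\,\mu(\bar s))$ of the closed-loop system is locally exponentially stable; in particular, for solutions starting sufficiently close to it, $s(t)\to\bar s$ and $\lim_{t\to\infty}\bar D(t)=\lim_{t\to\infty}D(t)=\mu(\bar s)$.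
   Context: The saturation function is $\operatorname{sat}_{[D_{\min},D_{\max}]}(x)=D_{\max}$ if $x>D_{\max}$, $=x$ if $x\in[D_{\min},D_{\max}]$, $=D_{\min}$ if $x<D_{\min}$. *)

From Stdlib Require Import Reals Lra.
Open Scope R_scope.

Definition sat (Dmin Dmax x : R) : R :=
  if Rlt_dec Dmax x then Dmax else if Rlt_dec x Dmin then Dmin else x.

Definition cont_on_at (f : R -> R) (a b x : R) : Prop :=
  forall eps, 0 < eps -> exists delta, 0 < delta /\
    forall y, a <= y <= b -> Rabs (y - x) < delta -> Rabs (f y - f x) < eps.

(* mu is continuously differentiable on [0, s_in] with derivative dmu:
   mu and dmu continuous on [0,s_in], and mu' = dmu on (0,s_in)
   (one-sided derivatives at the endpoints then follow). *)
Definition C1_on (mu dmu : R -> R) (a b : R) : Prop :=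
  (forall x, a <= x <= b -> cont_on_at mu a b x) /\
  (forall x, a <= x <= b -> cont_on_at dmu a b x) /\
  (forall x, a < x < b -> derivable_pt_lim mu x (dmu x)).

Definition Dfb (Dmin Dmax G1 sbar s Dbar : R) : R :=
  sat Dmin Dmax (Dbar - G1 * (s - sbar)).

Definition is_solution (mu : R -> R) (s_in sbar Dmin Dmax G1 G2 : R)
    (s b Dbar : R -> R) : Prop :=
  (forall x : R -> R, (x = s \/ x = b \/ x = Dbar) ->
     forall eps, 0 < eps -> exists delta, 0 < delta /\
       forall t, 0 <= t < delta -> Rabs (x t - x 0) < eps) /\
  (forall t, 0 < t ->
     let D := Dfb Dmin Dmax G1 sbar (s t) (Dbar t) in
     derivable_pt_lim s t (- mu (s t) * b t + D * (s_in - s t)) /\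
     derivable_pt_lim b t (mu (s t) * b t - D * b t) /\
     derivable_pt_lim Dbar t
       (- G2 * (s t - sbar) * (Dbar t - Dmin) * (Dmax - Dbar t))).

Definition dist3 (x1 y1 z1 x2 y2 z2 : R) : R :=
  sqrt ((x1 - x2)^2 + (y1 - y2)^2 + (z1 - z2)^2).

Definition tends_to_infty (f : R -> R) (l : R) : Prop :=
  forall eps, 0 < eps -> exists T, forall t, T <= t -> Rabs (f t - l) < eps.

From Stdlib Require Import Reals Lra Psatz List.
Import ListNotations.
Open Scope R_scope.

(* Coordinates: e = s - sbar, d = Dbar - mu(sbar), x = s + b - s_in.  Near the
   equilibrium the saturation is inactive and mu(s) = mu(sbar) + (p + ph) e with
   p = mu'(sbar) and ph small, so the closed loop is a perturbation of the linear
   system e' = b_eq (d - q_eff e) - D_eq x, d' = -k_adapt e, x' = -D_eq x, where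
   D_eq = mu(sbar), b_eq = s_in - sbar, q_eff = G1 + p > 0 (this is the
   hypothesis G1 > -mu'(sbar)) and k_adapt = G2 (D_eq - Dmin) (Dmax - D_eq) > 0.
   The quadratic form V = k_adapt e^2 + b_eq d^2 - 2 beta_V e d + gamma_V x^2
   (beta_V small, gamma_V large) is positive definite and decreases along the
   linear system at rate omega_lin; the higher-order terms of its derivative are
   bounded by eps |(e,d,x)|^2 when |e|, |d|, |x|, |ph| <= eps. *)

Definition right_cont0 (f : R -> R) : Prop :=
  forall eps, 0 < eps -> exists delta, 0 < delta /\
    forall t, 0 <= t < delta -> Rabs (f t - f 0) < eps.

Lemma right_cont0_limit (f : R -> R) :
  right_cont0 f <-> limit1_in f (fun t => 0 <= t) (f 0) 0.
Proof.
  split; intros H eps Heps; destruct (H eps Heps) as [delta [Hdelta Hf]];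
    exists delta; split; try lra.
  - intros t [Ht Hdist]; apply Hf; unfold dist in Hdist; simpl in Hdist;
      unfold R_dist in Hdist; rewrite Rminus_0_r, Rabs_right in Hdist; lra.
  - intros t Ht; apply (Hf t); split; [lra|];
      simpl; unfold R_dist; rewrite Rminus_0_r, Rabs_right; lra.
Qed.

Lemma limit_pow2 (f : R -> R) (D : R -> Prop) (l x0 : R) :
  limit1_in f D l x0 -> limit1_in (fun x => f x ^ 2) D (l ^ 2) x0.
Proof.
  intros Hf; pose proof (limit_mul f f D l l x0 Hf Hf) as Hsq.
  intros eps Heps; destruct (Hsq eps Heps) as [alpha [Halpha Hclose]].
  exists alpha; split; [exact Halpha|]; intros x Hx.
  replace (f x ^ 2) with (f x * f x) by ring; replace (l ^ 2) with (l * l) by ring.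
  exact (Hclose x Hx).
Qed.

Lemma derivable_cont_eps (f : R -> R) (x l : R) :
  derivable_pt_lim f x l -> forall eps, 0 < eps ->
  exists delta, 0 < delta /\ forall y, Rabs (y - x) < delta -> Rabs (f y - f x) < eps.
Proof.
  intros Hf eps Heps.
  destruct (derivable_continuous_pt f x (exist _ l Hf) eps Heps) as [alpha [Halpha Hclose]].
  exists alpha; split; [exact Halpha|]; intros y Hy.
  destruct (Req_dec y x) as [-> | Hneq].
  - rewrite Rminus_diag, Rabs_R0; lra.
  - exact (Hclose y (conj (conj I (not_eq_sym Hneq)) Hy)).
Qed.

Lemma first_crossing (g : R -> R) (t L : R) :
  (forall u eps, 0 <= u -> 0 < eps -> exists delta, 0 < delta /\
     forall y, u <= y < u + delta -> Rabs (g y - g u) < eps) ->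
  0 <= t -> g 0 < L -> L < g t ->
  exists t0, 0 <= t0 <= t /\ L <= g t0 /\ forall u, 0 <= u < t0 -> g u < L.
Proof.
  intros Hrc Ht Hg0 Hgt.
  set (E := fun tau => 0 <= tau <= t /\ forall u, 0 <= u <= tau -> g u < L).
  assert (HE0 : E 0).
  { split; [lra|]; intros u Hu; replace u with 0 by lra; exact Hg0. }
  destruct (completeness E) as [t0 [Hub Hlub]].
  { exists t; intros tau [Htau _]; lra. }
  { exists 0; exact HE0. }
  assert (Ht0 : 0 <= t0 <= t) by (split; [apply Hub, HE0 | apply Hlub; intros tau [? _]; lra]).
  assert (Hbelow : forall u, 0 <= u < t0 -> g u < L).
  { intros u Hu; destruct (Rlt_or_le (g u) L) as [Hlt | Hge]; [exact Hlt|].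
    assert (Hbound : is_upper_bound E u).
    { intros tau [_ Htau]; destruct (Rle_or_lt tau u) as [Hle | Hlt]; [exact Hle|].
      specialize (Htau u ltac:(lra)); lra. }
    specialize (Hlub u Hbound); lra. }
  exists t0; split; [exact Ht0|]; split; [|exact Hbelow].
  destruct (Rle_or_lt L (g t0)) as [Hle | Hlt]; [exact Hle | exfalso].
  assert (Hlt_t : t0 < t) by (destruct (Req_dec t0 t) as [-> | ?]; lra).
  destruct (Hrc t0 (L - g t0) (proj1 Ht0) ltac:(lra)) as [delta [Hdelta Hclose]].
  set (tau := Rmin (t0 + delta / 2) t).
  assert (Htau : E tau).
  { assert (tau <= t0 + delta / 2) by apply Rmin_l.
    split; [unfold tau; split; [apply Rmin_case | apply Rmin_r]; lra|].
    intros u Hu; destruct (Rlt_or_le u t0) as [Hu0 | Hu0]; [apply Hbelow; lra|].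
    specialize (Hclose u ltac:(lra)); apply Rabs_def2 in Hclose; lra. }
  specialize (Hub tau Htau); revert Hub; unfold tau; apply Rmin_case; lra.
Qed.

Lemma right_cont_everywhere (g g' : R -> R) :
  right_cont0 g -> (forall t, 0 < t -> derivable_pt_lim g t (g' t)) ->
  forall u eps, 0 <= u -> 0 < eps -> exists delta, 0 < delta /\
    forall y, u <= y < u + delta -> Rabs (g y - g u) < eps.
Proof.
  intros Hrc Hder u eps Hu Heps.
  destruct (Req_dec u 0) as [-> | Hu0].
  - destruct (Hrc eps Heps) as [delta [Hdelta Hclose]].
    exists delta; split; [exact Hdelta|]; intros y Hy; apply Hclose; lra.
  - destruct (derivable_cont_eps g u (g' u) (Hder u ltac:(lra)) eps Heps)
      as [delta [Hdelta Hclose]].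
    exists delta; split; [exact Hdelta|]; intros y Hy; apply Hclose.
    rewrite Rabs_right; lra.
Qed.

Lemma barrier (g g' : R -> R) (K : R) :
  right_cont0 g -> (forall t, 0 < t -> derivable_pt_lim g t (g' t)) ->
  (forall t, 0 < t -> g t < K -> g' t <= 0) -> g 0 < K ->
  forall t, 0 <= t -> g t <= g 0.
Proof.
  intros Hrc Hder Hsign HK t Ht.
  destruct (Rle_or_lt (g t) (g 0)) as [Hle | Hgt]; [exact Hle | exfalso].
  set (L := (g 0 + Rmin (g t) K) / 2).
  assert (HL : g 0 < L < g t /\ L < K)
    by (unfold L; pose proof (Rmin_l (g t) K); pose proof (Rmin_r (g t) K);
        pose proof (Rmin_glb_lt (g t) K (g 0) ltac:(lra) HK); lra).
  destruct (first_crossing g t L (right_cont_everywhere g g' Hrc Hder) Ht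
              ltac:(lra) ltac:(lra)) as [t0 [Ht0 [Hreach Hbelow]]].
  assert (Ht0pos : 0 < t0) by (destruct (Req_dec t0 0) as [-> | ?]; lra).
  (* On [t0/2, t0] the function stays below K, hence does not increase. *)
  destruct (MVT_cor2 g g' (t0 / 2) t0 ltac:(lra)) as [c [Hmvt Hc]].
  { intros c Hc; apply Hder; lra. }
  assert (Hgc : g' c <= 0) by (apply Hsign; [lra | specialize (Hbelow c ltac:(lra)); lra]).
  specialize (Hbelow (t0 / 2) ltac:(lra)).
  assert (g' c * (t0 - t0 / 2) <= 0) by nra.
  lra.
Qed.

Lemma derivable_pt_lim_exp_scaled (lam t : R) :
  derivable_pt_lim (fun y => exp (lam * y)) t (lam * exp (lam * t)).
Proof.
  replace (lam * exp (lam * t)) with (exp (lam * t) * lam) by ring.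
  apply (derivable_pt_lim_comp (fun y => lam * y) exp t lam (exp (lam * t))).
  - intros eps Heps; exists (mkposreal eps Heps); intros h Hh _.
    replace ((lam * (t + h) - lam * t) / h - lam) with 0 by (field; exact Hh).
    rewrite Rabs_R0; exact Heps.
  - apply derivable_pt_lim_exp.
Qed.

Lemma lyapunov_exp_decay (V V' : R -> R) (K lam : R) :
  right_cont0 V -> (forall t, 0 < t -> derivable_pt_lim V t (V' t)) ->
  (forall t, 0 <= t -> 0 <= V t) ->
  (forall t, 0 < t -> V t < K -> V' t <= - lam * V t) ->
  0 <= lam -> V 0 < K ->
  forall t, 0 <= t -> V t <= V 0 * exp (- lam * t).
Proof.
  intros Hrc Hder Hpos Hdecr Hlam HK.
  set (g := fun t => V t * exp (lam * t)).
  assert (Hexp_ge1 : forall t, 0 <= t -> 1 <= exp (lam * t)).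
  { intros t Ht; pose proof (exp_ineq1_le (lam * t)); nra. }
  assert (Hg0 : g 0 = V 0) by (unfold g; rewrite Rmult_0_r, exp_0; ring).
  assert (Hbar : forall t, 0 <= t -> g t <= g 0).
  { apply (barrier g (fun t => (V' t + lam * V t) * exp (lam * t)) K).
    - apply right_cont0_limit; apply limit_mul; [apply right_cont0_limit, Hrc|].
      apply right_cont0_limit; intros eps Heps.
      destruct (derivable_cont_eps _ 0 _ (derivable_pt_lim_exp_scaled lam 0) eps Heps)
        as [delta [Hdelta Hclose]].
      exists delta; split; [exact Hdelta|]; intros t Ht; apply Hclose.
      rewrite Rminus_0_r, Rabs_right; lra.
    - intros t Ht.
      replace ((V' t + lam * V t) * exp (lam * t))
        with (V' t * exp (lam * t) + V t * (lam * exp (lam * t))) by ring.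
      apply (derivable_pt_lim_mult V (fun y => exp (lam * y)));
        [apply Hder, Ht | apply derivable_pt_lim_exp_scaled].
    - intros t Ht Hgt.
      assert (HVK : V t < K)
        by (unfold g in Hgt; pose proof (Hexp_ge1 t ltac:(lra));
            pose proof (Hpos t ltac:(lra)); nra).
      pose proof (Hdecr t Ht HVK); pose proof (exp_pos (lam * t)); nra.
    - lra. }
  intros t Ht; specialize (Hbar t Ht); rewrite Hg0 in Hbar; unfold g in Hbar.
  assert (Hinv : exp (lam * t) * exp (- lam * t) = 1)
    by (rewrite <- exp_plus; replace (lam * t + - lam * t) with 0 by ring; apply exp_0).
  pose proof (exp_pos (- lam * t)).
  replace (V t) with (V t * exp (lam * t) * exp (- lam * t)) by (rewrite Rmult_assoc, Hinv; ring).
  apply Rmult_le_compat_r; lra.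
Qed.

Lemma tends_of_exp_bound (f : R -> R) (l C lam : R) :
  0 <= C -> 0 < lam ->
  (forall t, 0 <= t -> Rabs (f t - l) <= C * exp (- lam * t)) ->
  tends_to_infty f l.
Proof.
  intros HC Hlam Hbound eps Heps.
  exists (C / (lam * eps)); intros t Ht.
  assert (Ht0 : 0 <= t)
    by (apply Rle_trans with (2 := Ht); unfold Rdiv;
        apply Rmult_le_pos; [lra | left; apply Rinv_0_lt_compat; nra]).
  assert (HCt : C <= lam * eps * t).
  { apply Rmult_le_reg_r with (/ (lam * eps)); [apply Rinv_0_lt_compat; nra|].
    replace (lam * eps * t * / (lam * eps)) with t by (field; lra); exact Ht. }
  pose proof (exp_ineq1_le (lam * t)) as Hexp.
  specialize (Hbound t Ht0); pose proof (exp_pos (lam * t)).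
  rewrite <- Ropp_mult_distr_l, exp_Ropp in Hbound.
  apply Rle_lt_trans with (1 := Hbound).
  apply Rmult_lt_reg_r with (exp (lam * t)); [lra|].
  rewrite Rmult_assoc, Rinv_l by lra; nra.
Qed.

Lemma small_mult (u v eps : R) :
  Rabs u <= eps -> Rabs v <= eps -> eps <= 1 -> Rabs (u * v) <= eps.
Proof.
  intros Hu Hv Heps; rewrite Rabs_mult.
  pose proof (Rabs_pos u); pose proof (Rabs_pos v); nra.
Qed.

Fixpoint dot (cs ts : list R) : R :=
  match cs, ts with
  | c :: cs', t :: ts' => c * t + dot cs' ts'
  | _, _ => 0
  end.

Definition l1 (cs : list R) : R := fold_right (fun c acc => Rabs c + acc) 0 cs.

Lemma l1_nonneg (cs : list R) : 0 <= l1 cs.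
Proof. induction cs as [|c cs IH]; simpl; [lra | pose proof (Rabs_pos c); lra]. Qed.

Lemma dot_small (cs ts : list R) (eps : R) :
  0 <= eps -> Forall (fun t => Rabs t <= eps) ts -> Rabs (dot cs ts) <= eps * l1 cs.
Proof.
  intros Heps; revert ts; induction cs as [|c cs IH]; intros ts Hts; simpl.
  - destruct ts; rewrite Rabs_R0; lra.
  - destruct ts as [|t ts].
    + rewrite Rabs_R0; pose proof (Rabs_pos c); pose proof (l1_nonneg cs).
      nra.
    + inversion Hts as [|? ? Ht Hts']; subst.
      specialize (IH ts Hts').
      eapply Rle_trans; [apply Rabs_triang|]; rewrite Rabs_mult.
      pose proof (Rabs_pos c); pose proof (Rabs_pos t); nra.
Qed.

(* Pointwise forms of the Stdlib differentiation rules, convenient for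
   differentiating explicit expressions in a trajectory. *)
Lemma deriv_eq (f : R -> R) (x l1 l2 : R) :
  derivable_pt_lim f x l1 -> l1 = l2 -> derivable_pt_lim f x l2.
Proof. intros Hf <-; exact Hf. Qed.

Lemma deriv_const (c x : R) : derivable_pt_lim (fun _ => c) x 0.
Proof. apply derivable_pt_lim_const. Qed.

Lemma deriv_plus (f g : R -> R) (x lf lg : R) :
  derivable_pt_lim f x lf -> derivable_pt_lim g x lg ->
  derivable_pt_lim (fun y => f y + g y) x (lf + lg).
Proof. apply derivable_pt_lim_plus. Qed.

Lemma deriv_minus (f g : R -> R) (x lf lg : R) :
  derivable_pt_lim f x lf -> derivable_pt_lim g x lg ->
  derivable_pt_lim (fun y => f y - g y) x (lf - lg).
Proof. apply derivable_pt_lim_minus. Qed.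

Lemma deriv_mult (f g : R -> R) (x lf lg : R) :
  derivable_pt_lim f x lf -> derivable_pt_lim g x lg ->
  derivable_pt_lim (fun y => f y * g y) x (lf * g x + f x * lg).
Proof. apply derivable_pt_lim_mult. Qed.

Lemma deriv_sq (f : R -> R) (x l : R) :
  derivable_pt_lim f x l -> derivable_pt_lim (fun y => f y ^ 2) x (2 * f x * l).
Proof.
  intros Hf; apply deriv_eq with (INR 2 * f x ^ 1 * l).
  - apply (derivable_pt_lim_comp f (fun u => u ^ 2)); [exact Hf | apply derivable_pt_lim_pow].
  - simpl; ring.
Qed.

Lemma derivable_linear_expansion (f : R -> R) (x0 l : R) :
  derivable_pt_lim f x0 l -> forall eps, 0 < eps ->
  exists delta, 0 < delta /\ forall y, Rabs (y - x0) < delta ->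
    exists ph, Rabs ph <= eps /\ f y = f x0 + (l + ph) * (y - x0).
Proof.
  intros Hf eps Heps; destruct (Hf eps Heps) as [delta Hdelta].
  exists delta; split; [apply cond_pos|]; intros y Hy.
  destruct (Req_dec y x0) as [-> | Hneq].
  - exists 0; split; [rewrite Rabs_R0; lra | ring].
  - specialize (Hdelta (y - x0) ltac:(lra) Hy); replace (x0 + (y - x0)) with y in Hdelta by ring.
    exists ((f y - f x0) / (y - x0) - l); split; [lra | field; lra].
Qed.

Lemma limit_const (c : R) (D : R -> Prop) (x0 : R) : limit1_in (fun _ => c) D c x0.
Proof. exact (limit_free (fun _ => c) D x0 x0). Qed.

Lemma sat_inside (Dmin Dmax x : R) : Dmin <= x <= Dmax -> sat Dmin Dmax x = x.
Proof.
  intros Hx; unfold sat.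
  destruct (Rlt_dec Dmax x); [lra|]; destruct (Rlt_dec x Dmin); lra.
Qed.

Lemma abs_lt_of_sq_lt (u r : R) : u ^ 2 < r ^ 2 -> 0 < r -> Rabs u < r.
Proof.
  intros Hsq Hr; destruct (Rle_or_lt r (Rabs u)) as [Hge | Hlt]; [|exact Hlt].
  assert (Rabs u ^ 2 = u ^ 2) by (unfold Rabs; destruct (Rcase_abs u); ring).
  nra.
Qed.

Lemma sqrt_le_scaled (X Y c : R) :
  0 <= Y -> 0 <= c -> X <= c ^ 2 * Y -> sqrt X <= c * sqrt Y.
Proof.
  intros HY Hc HX.
  rewrite <- (sqrt_pow2 c Hc), <- sqrt_mult_alt by apply pow2_ge_0.
  apply sqrt_le_1_alt; exact HX.
Qed.

Definition closed_loop_stable (s_in : R) (mu : R -> R) (sbar Dmin Dmax G1 G2 : R) : Prop :=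
  exists delta M lam : R, 0 < delta /\ 0 < M /\ 0 < lam /\
    forall s b Dbar : R -> R,
      is_solution mu s_in sbar Dmin Dmax G1 G2 s b Dbar ->
      dist3 (s 0) (b 0) (Dbar 0) sbar (s_in - sbar) (mu sbar) < delta ->
      (forall t, 0 <= t ->
         dist3 (s t) (b t) (Dbar t) sbar (s_in - sbar) (mu sbar)
         <= M * exp (- lam * t) *
            dist3 (s 0) (b 0) (Dbar 0) sbar (s_in - sbar) (mu sbar)) /\
      tends_to_infty s sbar /\
      tends_to_infty Dbar (mu sbar) /\
      tends_to_infty (fun t => Dfb Dmin Dmax G1 sbar (s t) (Dbar t)) (mu sbar).

Section Chemostat.

(* Chemostat data; p is the derivative of mu at sbar, and G1 + p > 0 is the
   gain condition G1 > -mu'(sbar). *)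
Variables (s_in : R) (mu : R -> R) (sbar Dmin Dmax G1 G2 p : R).
Hypotheses (Hmu_diff : derivable_pt_lim mu sbar p) (Hsbar : sbar < s_in)
  (HDmin : 0 < Dmin) (HDlo : Dmin < mu sbar) (HDhi : mu sbar < Dmax)
  (HG1 : 0 < G1) (HG2 : 0 < G2) (Hq : 0 < G1 + p).

(* Equilibrium dilution rate and biomass, and the gains of the linearized
   closed loop e' = b_eq (d - q_eff e) - D_eq x,  d' = -k_adapt e,  x' = -D_eq x. *)
Definition D_eq : R := mu sbar.
Definition b_eq : R := s_in - sbar.
Definition q_eff : R := G1 + p.
Definition k_adapt : R := G2 * (D_eq - Dmin) * (Dmax - D_eq).

(* Weights of the Lyapunov function k_adapt e^2 + b_eq d^2 - 2 beta_V e d + gamma_V x^2. *)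
Definition beta_V : R := b_eq * k_adapt * q_eff / (4 * (k_adapt + b_eq * q_eff ^ 2)).
Definition gamma_V : R := beta_V * D_eq / b_eq + k_adapt * D_eq / (b_eq * q_eff) + 1 / 2.

Definition omega_lin : R := Rmin (b_eq * k_adapt * q_eff) (Rmin (beta_V * b_eq) D_eq).

Lemma D_eq_pos : 0 < D_eq.
Proof. unfold D_eq; lra. Qed.

Lemma b_eq_pos : 0 < b_eq.
Proof. unfold b_eq; lra. Qed.

Lemma k_adapt_pos : 0 < k_adapt.
Proof. unfold k_adapt, D_eq; apply Rmult_lt_0_compat; [apply Rmult_lt_0_compat|]; lra. Qed.

Lemma beta_V_pos : 0 < beta_V.
Proof.
  pose proof b_eq_pos; pose proof k_adapt_pos; unfold beta_V, q_eff in *.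
  assert (0 <= b_eq * (G1 + p) ^ 2) by (apply Rmult_le_pos; [lra | apply pow2_ge_0]).
  apply Rdiv_lt_0_compat; [apply Rmult_lt_0_compat; [apply Rmult_lt_0_compat|] | ]; lra.
Qed.

Lemma gamma_V_pos : 0 < gamma_V.
Proof.
  pose proof b_eq_pos; pose proof k_adapt_pos; pose proof beta_V_pos; pose proof D_eq_pos.
  assert (0 < beta_V * D_eq / b_eq) by (apply Rdiv_lt_0_compat; nra).
  assert (0 < k_adapt * D_eq / (b_eq * q_eff)) by (unfold q_eff; apply Rdiv_lt_0_compat; nra).
  unfold gamma_V; lra.
Qed.

Lemma omega_lin_pos : 0 < omega_lin.
Proof.
  pose proof b_eq_pos; pose proof k_adapt_pos; pose proof beta_V_pos; pose proof D_eq_pos.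
  assert (0 < b_eq * k_adapt * q_eff)
    by (apply Rmult_lt_0_compat; [apply Rmult_lt_0_compat|]; unfold q_eff; lra).
  unfold omega_lin; repeat apply Rmin_glb_lt; [lra | apply Rmult_lt_0_compat; lra | lra].
Qed.

(* beta_V is small enough for the cross term: the form is positive definite. *)
Lemma beta_V_sq_le : 4 * beta_V ^ 2 <= b_eq * k_adapt.
Proof.
  pose proof b_eq_pos; pose proof k_adapt_pos.
  set (W := k_adapt + b_eq * q_eff ^ 2).
  assert (HW : b_eq * q_eff ^ 2 <= W /\ k_adapt <= W) by (unfold W; split; nra).
  assert (HW0 : 0 < W) by lra.
  assert (Hbeta : beta_V * (4 * W) = b_eq * k_adapt * q_eff) by (unfold beta_V; fold W; field; lra).
  assert (0 < b_eq * k_adapt) by nra.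
  (* 16 beta_V^2 W^2 = (b_eq k_adapt q_eff)^2 <= b_eq k_adapt W^2. *)
  assert (b_eq * k_adapt * q_eff ^ 2 <= W ^ 2) by nra.
  assert (Hsq : 16 * beta_V ^ 2 * W ^ 2 <= b_eq * k_adapt * W ^ 2).
  { replace (16 * beta_V ^ 2 * W ^ 2) with ((beta_V * (4 * W)) ^ 2) by ring.
    rewrite Hbeta; replace ((b_eq * k_adapt * q_eff) ^ 2)
      with (b_eq * k_adapt * (b_eq * k_adapt * q_eff ^ 2)) by ring.
    apply Rmult_le_compat_l; lra. }
  assert (0 < W ^ 2) by (apply pow_lt; lra).
  assert (16 * beta_V ^ 2 <= b_eq * k_adapt) by (apply Rmult_le_reg_r with (W ^ 2); lra).
  pose proof (pow2_ge_0 beta_V); lra.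
Qed.

Definition lyap (e d x : R) : R :=
  k_adapt * e ^ 2 + b_eq * d ^ 2 - 2 * beta_V * (e * d) + gamma_V * x ^ 2.

Definition lyap_deriv (e d x e' d' x' : R) : R :=
  2 * k_adapt * e * e' + 2 * b_eq * d * d' - 2 * beta_V * (e' * d + e * d') + 2 * gamma_V * x * x'.

Lemma lyap_chain (e d x : R -> R) (t e' d' x' : R) :
  derivable_pt_lim e t e' -> derivable_pt_lim d t d' -> derivable_pt_lim x t x' ->
  derivable_pt_lim (fun y => lyap (e y) (d y) (x y)) t (lyap_deriv (e t) (d t) (x t) e' d' x').
Proof.
  intros He Hd Hx; unfold lyap.
  eapply deriv_eq.
  - repeat first [ apply deriv_minus | apply deriv_plus | apply deriv_sq | apply deriv_mult
                 | apply deriv_const | eassumption ].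
  - unfold lyap_deriv; ring.
Qed.

Definition lyap_lo : R := Rmin (k_adapt / 2) (Rmin (b_eq / 2) gamma_V).
Definition lyap_hi : R := k_adapt + b_eq + beta_V + gamma_V.

Lemma lyap_lo_pos : 0 < lyap_lo.
Proof.
  pose proof b_eq_pos; pose proof k_adapt_pos; pose proof gamma_V_pos.
  unfold lyap_lo; repeat apply Rmin_glb_lt; lra.
Qed.

Lemma lyap_lower (e d x : R) : lyap_lo * (e ^ 2 + d ^ 2 + x ^ 2) <= lyap e d x.
Proof.
  pose proof b_eq_pos; pose proof k_adapt_pos; pose proof beta_V_sq_le.
  assert (Hlo : lyap_lo <= k_adapt / 2 /\ lyap_lo <= b_eq / 2 /\ lyap_lo <= gamma_V).
  { pose proof (Rmin_l (k_adapt / 2) (Rmin (b_eq / 2) gamma_V)).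
    pose proof (Rmin_r (k_adapt / 2) (Rmin (b_eq / 2) gamma_V)).
    pose proof (Rmin_l (b_eq / 2) gamma_V); pose proof (Rmin_r (b_eq / 2) gamma_V).
    unfold lyap_lo; lra. }
  (* The cross term is dominated: k_adapt/2 e^2 + b_eq/2 d^2 >= 2 beta_V e d. *)
  assert (Hcross : 0 <= k_adapt / 2 * e ^ 2 + b_eq / 2 * d ^ 2 - 2 * beta_V * (e * d)).
  { apply Rmult_le_reg_l with k_adapt; [lra|].
    pose proof (pow2_ge_0 (k_adapt * e - 2 * beta_V * d)); pose proof (pow2_ge_0 d); nra. }
  pose proof (pow2_ge_0 e); pose proof (pow2_ge_0 d); pose proof (pow2_ge_0 x).
  unfold lyap; nra.
Qed.

Lemma lyap_upper (e d x : R) : lyap e d x <= lyap_hi * (e ^ 2 + d ^ 2 + x ^ 2).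
Proof.
  pose proof b_eq_pos; pose proof k_adapt_pos; pose proof beta_V_pos; pose proof gamma_V_pos.
  pose proof (pow2_ge_0 (e + d)); pose proof (pow2_ge_0 e); pose proof (pow2_ge_0 d).
  pose proof (pow2_ge_0 x); unfold lyap, lyap_hi; nra.
Qed.

Definition lin_deriv (e d x : R) : R :=
  lyap_deriv e d x (b_eq * (d - q_eff * e) - D_eq * x) (- k_adapt * e) (- D_eq * x).

Lemma lin_deriv_neg (e d x : R) : lin_deriv e d x <= - omega_lin * (e ^ 2 + d ^ 2 + x ^ 2).
Proof.
  pose proof b_eq_pos; pose proof k_adapt_pos; pose proof beta_V_pos; pose proof D_eq_pos.
  assert (Hq' : 0 < q_eff) by (unfold q_eff; lra).
  assert (Hbeta : beta_V * (2 * k_adapt + 2 * b_eq * q_eff ^ 2) = b_eq * k_adapt * q_eff / 2).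
  { assert (0 < k_adapt + b_eq * q_eff ^ 2) by (pose proof (pow2_ge_0 q_eff); nra).
    unfold beta_V; field; lra. }
  assert (Hgam : 2 * gamma_V * D_eq
                 = 2 * (beta_V * D_eq ^ 2 / b_eq) + 2 * (k_adapt * D_eq ^ 2 / (b_eq * q_eff)) + D_eq)
    by (unfold gamma_V; field; lra).
  assert (Homega : omega_lin <= b_eq * k_adapt * q_eff /\ omega_lin <= beta_V * b_eq
                   /\ omega_lin <= D_eq).
  { pose proof (Rmin_l (b_eq * k_adapt * q_eff) (Rmin (beta_V * b_eq) D_eq)).
    pose proof (Rmin_r (b_eq * k_adapt * q_eff) (Rmin (beta_V * b_eq) D_eq)).
    pose proof (Rmin_l (beta_V * b_eq) D_eq); pose proof (Rmin_r (beta_V * b_eq) D_eq).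
    unfold omega_lin; lra. }
  (* Young's inequality on each of the three cross terms. *)
  assert (Hed : 2 * beta_V * b_eq * q_eff * e * d
                <= beta_V * b_eq / 2 * d ^ 2 + 2 * beta_V * b_eq * q_eff ^ 2 * e ^ 2).
  { pose proof (pow2_ge_0 (d - 2 * q_eff * e)).
    assert (0 <= beta_V * b_eq * (d - 2 * q_eff * e) ^ 2) by (apply Rmult_le_pos; nra). nra. }
  assert (Hxd : 2 * beta_V * D_eq * x * d
                <= beta_V * b_eq / 2 * d ^ 2 + 2 * (beta_V * D_eq ^ 2 / b_eq) * x ^ 2).
  { apply Rmult_le_reg_l with b_eq; [lra|].
    replace (b_eq * (beta_V * b_eq / 2 * d ^ 2 + 2 * (beta_V * D_eq ^ 2 / b_eq) * x ^ 2))
      with (beta_V * b_eq ^ 2 / 2 * d ^ 2 + 2 * beta_V * D_eq ^ 2 * x ^ 2) by (field; lra).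
    assert (0 <= beta_V * (b_eq * d - 2 * D_eq * x) ^ 2)
      by (apply Rmult_le_pos; [lra | apply pow2_ge_0]).
    nra. }
  assert (Hex : - 2 * k_adapt * D_eq * e * x
                <= b_eq * k_adapt * q_eff / 2 * e ^ 2
                   + 2 * (k_adapt * D_eq ^ 2 / (b_eq * q_eff)) * x ^ 2).
  { apply Rmult_le_reg_l with (b_eq * q_eff); [nra|].
    replace (b_eq * q_eff * (b_eq * k_adapt * q_eff / 2 * e ^ 2
                             + 2 * (k_adapt * D_eq ^ 2 / (b_eq * q_eff)) * x ^ 2))
      with (k_adapt * (b_eq * q_eff) ^ 2 / 2 * e ^ 2 + 2 * k_adapt * D_eq ^ 2 * x ^ 2) by (field; lra).
    assert (0 <= k_adapt * (b_eq * q_eff * e + 2 * D_eq * x) ^ 2)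
      by (apply Rmult_le_pos; [lra | apply pow2_ge_0]).
    nra. }
  assert (Hsum : lin_deriv e d x
                 <= - (b_eq * k_adapt * q_eff) * e ^ 2 - beta_V * b_eq * d ^ 2 - D_eq * x ^ 2)
    by (unfold lin_deriv, lyap_deriv; nra).
  pose proof (pow2_ge_0 e); pose proof (pow2_ge_0 d); pose proof (pow2_ge_0 x); nra.
Qed.

(* The nonlinear closed loop in the coordinates (e, d, x), without saturation,
   where mu(sbar + e) = D_eq + (p + ph) e. *)
Definition err_s (e d x ph : R) : R :=
  (d - G1 * e - (p + ph) * e) * (b_eq - e) - (D_eq + (p + ph) * e) * x.
Definition err_D (e d : R) : R := - G2 * e * (D_eq + d - Dmin) * (Dmax - D_eq - d).
Definition err_x (e d x : R) : R := - (D_eq + d - G1 * e) * x.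

(* The higher-order part of the Lyapunov derivative is
   e^2 (c1 . t1) + e d (c2 . t2) + x^2 (c3 . t3), with constant coefficient
   lists c_i and lists t_i of small terms. *)
Definition c_adapt : R := Dmax + Dmin - 2 * D_eq.
Definition coef1 : list R :=
  [-2 * k_adapt * b_eq; -2 * k_adapt; 2 * k_adapt * q_eff; 2 * k_adapt;
   -2 * k_adapt * p; -2 * k_adapt;
   -2 * beta_V * q_eff; -2 * beta_V; 2 * beta_V * G2 * c_adapt; -2 * beta_V * G2].
Definition terms1 (e d x ph : R) : list R := [ph; d; e; ph * e; x; ph * x; d; ph * d; d; d * d].
Definition coef2 : list R :=
  [2 * beta_V * b_eq; 2 * beta_V; 2 * beta_V * p; 2 * beta_V;
   -2 * b_eq * G2 * c_adapt; 2 * b_eq * G2].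
Definition terms2 (d x ph : R) : list R := [ph; d; x; ph * x; d; d * d].
Definition coef3 : list R := [-2 * gamma_V; 2 * gamma_V * G1].
Definition terms3 (e d : R) : list R := [d; e].

Definition remainder (e d x ph : R) : R :=
  e * e * dot coef1 (terms1 e d x ph) + e * d * dot coef2 (terms2 d x ph)
  + x * x * dot coef3 (terms3 e d).

Definition coef_size : R := l1 coef1 + l1 coef2 + l1 coef3.

Lemma lyap_deriv_split (e d x ph : R) :
  lyap_deriv e d x (err_s e d x ph) (err_D e d) (err_x e d x)
  = lin_deriv e d x + remainder e d x ph.
Proof.
  unfold lin_deriv, lyap_deriv, remainder, err_s, err_D, err_x, coef1, coef2, coef3,
    terms1, terms2, terms3, c_adapt, k_adapt, q_eff; simpl; ring.
Qed.

Lemma remainder_small (e d x ph eps : R) :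
  Rabs e <= eps -> Rabs d <= eps -> Rabs x <= eps -> Rabs ph <= eps -> eps <= 1 ->
  remainder e d x ph <= eps * coef_size * (e ^ 2 + d ^ 2 + x ^ 2).
Proof.
  intros He Hd Hx Hph Heps1.
  assert (Heps0 : 0 <= eps) by (pose proof (Rabs_pos e); lra).
  pose proof (small_mult ph e eps Hph He Heps1) as Hphe.
  pose proof (small_mult ph x eps Hph Hx Heps1) as Hphx.
  pose proof (small_mult ph d eps Hph Hd Heps1) as Hphd.
  pose proof (small_mult d d eps Hd Hd Heps1) as Hdd.
  assert (H1 : Rabs (dot coef1 (terms1 e d x ph)) <= eps * l1 coef1)
    by (apply dot_small;
        [exact Heps0 | repeat (apply Forall_cons; [assumption|]); apply Forall_nil]).
  assert (H2 : Rabs (dot coef2 (terms2 d x ph)) <= eps * l1 coef2)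
    by (apply dot_small;
        [exact Heps0 | repeat (apply Forall_cons; [assumption|]); apply Forall_nil]).
  assert (H3 : Rabs (dot coef3 (terms3 e d)) <= eps * l1 coef3)
    by (apply dot_small;
        [exact Heps0 | repeat (apply Forall_cons; [assumption|]); apply Forall_nil]).
  set (r1 := dot coef1 (terms1 e d x ph)) in *; set (r2 := dot coef2 (terms2 d x ph)) in *;
    set (r3 := dot coef3 (terms3 e d)) in *.
  pose proof (Rle_abs r1); pose proof (Rle_abs r3).
  (* |e d| <= (e^2 + d^2) / 2 controls the mixed term. *)
  assert (Hmixed : e * d * r2 <= (e ^ 2 + d ^ 2) / 2 * (eps * l1 coef2)).
  { pose proof (pow2_ge_0 (e - d)); pose proof (pow2_ge_0 (e + d)).
    assert (Rabs (e * d) <= (e ^ 2 + d ^ 2) / 2) by (apply Rabs_le; split; nra).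
    apply Rle_trans with (Rabs (e * d) * Rabs r2);
      [rewrite <- Rabs_mult; apply Rle_abs |].
    apply Rmult_le_compat; try apply Rabs_pos; assumption. }
  pose proof (l1_nonneg coef1); pose proof (l1_nonneg coef2); pose proof (l1_nonneg coef3).
  pose proof (pow2_ge_0 e); pose proof (pow2_ge_0 d); pose proof (pow2_ge_0 x).
  unfold remainder, coef_size; fold r1 r2 r3.
  assert (e * e * r1 <= e ^ 2 * (eps * l1 coef1)) by nra.
  assert (x * x * r3 <= x ^ 2 * (eps * l1 coef3)) by nra.
  assert (0 <= eps * l1 coef1 * (d ^ 2 + x ^ 2))
    by (apply Rmult_le_pos; [apply Rmult_le_pos|]; lra).
  assert (0 <= eps * l1 coef2 * (e ^ 2 + d ^ 2 + 2 * x ^ 2))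
    by (apply Rmult_le_pos; [apply Rmult_le_pos|]; lra).
  assert (0 <= eps * l1 coef3 * (e ^ 2 + d ^ 2))
    by (apply Rmult_le_pos; [apply Rmult_le_pos|]; lra).
  lra.
Qed.

Definition Dcl (s Db : R) : R := Dfb Dmin Dmax G1 sbar s Db.
Definition field_s (s b Db : R) : R := - mu s * b + Dcl s Db * (s_in - s).
Definition field_b (s b Db : R) : R := mu s * b - Dcl s Db * b.
Definition field_D (s Db : R) : R := - G2 * (s - sbar) * (Db - Dmin) * (Dmax - Db).

Definition V3 (s b Db : R) : R := lyap (s - sbar) (Db - D_eq) (s + b - s_in).
Definition dV3 (s b Db : R) : R :=
  lyap_deriv (s - sbar) (Db - D_eq) (s + b - s_in)
    (field_s s b Db) (field_D s Db) (field_s s b Db + field_b s b Db).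
Definition dev2 (s b Db : R) : R := (s - sbar) ^ 2 + (Db - D_eq) ^ 2 + (s + b - s_in) ^ 2.

Definition decay_rate : R := omega_lin / (2 * lyap_hi).

Lemma lyap_hi_pos : 0 < lyap_hi.
Proof.
  pose proof b_eq_pos; pose proof k_adapt_pos; pose proof beta_V_pos; pose proof gamma_V_pos.
  unfold lyap_hi; lra.
Qed.

Lemma decay_rate_pos : 0 < decay_rate.
Proof.
  pose proof omega_lin_pos; pose proof lyap_hi_pos.
  unfold decay_rate; apply Rdiv_lt_0_compat; lra.
Qed.

Definition sqdist (s b Db : R) : R := (s - sbar) ^ 2 + (b - b_eq) ^ 2 + (Db - D_eq) ^ 2.

(* The shear (s, b) -> (s, s + b) distorts squared distances by at most 3. *)
Lemma dev2_sqdist (s b Db : R) :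
  dev2 s b Db <= 3 * sqdist s b Db /\ sqdist s b Db <= 3 * dev2 s b Db.
Proof.
  unfold dev2, sqdist.
  replace (s + b - s_in) with ((b - b_eq) + (s - sbar)) by (unfold b_eq; ring).
  pose proof (pow2_ge_0 (b - b_eq - (s - sbar))); pose proof (pow2_ge_0 (b - b_eq + 2 * (s - sbar))).
  pose proof (pow2_ge_0 (s - sbar)); pose proof (pow2_ge_0 (Db - D_eq)); split; nra.
Qed.

Lemma sqdist_nonneg (s b Db : R) : 0 <= sqdist s b Db.
Proof.
  unfold sqdist; pose proof (pow2_ge_0 (s - sbar)); pose proof (pow2_ge_0 (b - b_eq));
    pose proof (pow2_ge_0 (Db - D_eq)); lra.
Qed.

Lemma coords_le_dist (s b Db : R) :
  Rabs (s - sbar) <= sqrt (sqdist s b Db) /\ Rabs (Db - D_eq) <= sqrt (sqdist s b Db).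
Proof.
  unfold sqdist; pose proof (pow2_ge_0 (s - sbar)); pose proof (pow2_ge_0 (b - b_eq));
    pose proof (pow2_ge_0 (Db - D_eq)).
  split; rewrite <- sqrt_Rsqr_abs; apply sqrt_le_1_alt; unfold Rsqr; simpl in *; lra.
Qed.

Lemma V3_sqdist (s b Db : R) :
  lyap_lo * sqdist s b Db <= 3 * V3 s b Db /\ V3 s b Db <= 3 * lyap_hi * sqdist s b Db.
Proof.
  pose proof lyap_lo_pos; pose proof lyap_hi_pos.
  destruct (dev2_sqdist s b Db) as [Hsh1 Hsh2].
  pose proof (lyap_lower (s - sbar) (Db - D_eq) (s + b - s_in)).
  pose proof (lyap_upper (s - sbar) (Db - D_eq) (s + b - s_in)).
  assert (lyap_lo * sqdist s b Db <= lyap_lo * (3 * dev2 s b Db)) by (apply Rmult_le_compat_l; lra).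
  assert (lyap_hi * dev2 s b Db <= lyap_hi * (3 * sqdist s b Db)) by (apply Rmult_le_compat_l; lra).
  unfold V3, dev2 in *; lra.
Qed.

Section Neighbourhood.

(* A radius rho of a neighbourhood of the equilibrium in which the dilution
   rate is not saturated and mu is eps-close to its linearization, with eps
   small enough that the higher-order terms cannot spoil the decay. *)
Variables (eps rho : R).
Hypotheses (Heps1 : eps <= 1) (Heps_size : eps * coef_size <= omega_lin / 2)
  (Hrho0 : 0 < rho) (Hrho_eps : rho <= eps)
  (Hrho_lo : (1 + G1) * rho <= D_eq - Dmin) (Hrho_hi : (1 + G1) * rho <= Dmax - D_eq)
  (Hrho_mu : forall y, Rabs (y - sbar) < rho ->
     exists ph, Rabs ph <= eps /\ mu y = D_eq + (p + ph) * (y - sbar)).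

(* Sublevel of V3 contained in the rho-neighbourhood. *)
Definition Vmax : R := lyap_lo * rho ^ 2.

Lemma dilution_unsaturated (s Db : R) :
  Rabs (s - sbar) < rho -> Rabs (Db - D_eq) < rho ->
  Dcl s Db = D_eq + (Db - D_eq) - G1 * (s - sbar).
Proof.
  intros He Hd; apply Rabs_def2 in He; apply Rabs_def2 in Hd.
  unfold Dcl, Dfb; rewrite sat_inside; [ring|].
  assert (G1 * (s - sbar) < G1 * rho) by (apply Rmult_lt_compat_l; lra).
  assert (G1 * (- rho) < G1 * (s - sbar)) by (apply Rmult_lt_compat_l; lra).
  split; lra.
Qed.

Lemma sublevel_small (s b Db : R) :
  V3 s b Db < Vmax ->
  Rabs (s - sbar) < rho /\ Rabs (Db - D_eq) < rho /\ Rabs (s + b - s_in) < rho.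
Proof.
  intros HV.
  assert (Hdev : dev2 s b Db < rho ^ 2).
  { pose proof lyap_lo_pos; pose proof (lyap_lower (s - sbar) (Db - D_eq) (s + b - s_in)).
    apply Rmult_lt_reg_l with lyap_lo; [lra|]; unfold V3, Vmax, dev2 in *; lra. }
  unfold dev2 in Hdev.
  pose proof (pow2_ge_0 (s - sbar)); pose proof (pow2_ge_0 (Db - D_eq));
    pose proof (pow2_ge_0 (s + b - s_in)).
  split; [|split]; apply abs_lt_of_sq_lt; lra.
Qed.

Lemma V3_decrease (s b Db : R) : V3 s b Db < Vmax -> dV3 s b Db <= - decay_rate * V3 s b Db.
Proof.
  intros HV; destruct (sublevel_small s b Db HV) as [He [Hd Hx]].
  destruct (Hrho_mu s He) as [ph [Hph Hmu]].
  assert (HD := dilution_unsaturated s Db He Hd).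
  assert (Hfield : dV3 s b Db = lyap_deriv (s - sbar) (Db - D_eq) (s + b - s_in)
      (err_s (s - sbar) (Db - D_eq) (s + b - s_in) ph) (err_D (s - sbar) (Db - D_eq))
      (err_x (s - sbar) (Db - D_eq) (s + b - s_in))).
  { unfold dV3, field_s, field_b, field_D, err_s, err_D, err_x, b_eq.
    rewrite Hmu, HD; f_equal; ring. }
  rewrite Hfield, lyap_deriv_split.
  pose proof (lin_deriv_neg (s - sbar) (Db - D_eq) (s + b - s_in)).
  pose proof (remainder_small (s - sbar) (Db - D_eq) (s + b - s_in) ph eps
                ltac:(lra) ltac:(lra) ltac:(lra) Hph Heps1).
  pose proof (lyap_upper (s - sbar) (Db - D_eq) (s + b - s_in)).
  pose proof lyap_hi_pos; pose proof omega_lin_pos; pose proof decay_rate_pos.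
  assert (Hrate : decay_rate * lyap_hi = omega_lin / 2) by (unfold decay_rate; field; lra).
  set (S := (s - sbar) ^ 2 + (Db - D_eq) ^ 2 + (s + b - s_in) ^ 2) in *.
  assert (0 <= S) by (unfold S; pose proof (pow2_ge_0 (s - sbar)); pose proof (pow2_ge_0 (Db - D_eq));
                      pose proof (pow2_ge_0 (s + b - s_in)); lra).
  assert (eps * coef_size * S <= omega_lin / 2 * S) by (apply Rmult_le_compat_r; lra).
  assert (decay_rate * lyap (s - sbar) (Db - D_eq) (s + b - s_in) <= decay_rate * (lyap_hi * S))
    by (apply Rmult_le_compat_l; lra).
  unfold V3; nra.
Qed.

Definition init_radius : R := sqrt (Vmax / (3 * lyap_hi)).
Definition overshoot : R := sqrt (9 * lyap_hi / lyap_lo).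

Lemma init_in_sublevel (s b Db : R) : sqrt (sqdist s b Db) < init_radius -> V3 s b Db < Vmax.
Proof.
  intros Hinit; pose proof lyap_hi_pos.
  assert (Hsq : sqdist s b Db < Vmax / (3 * lyap_hi)) by (apply sqrt_lt_0_alt; exact Hinit).
  assert (3 * lyap_hi * sqdist s b Db < Vmax).
  { apply Rmult_lt_reg_r with (/ (3 * lyap_hi)); [apply Rinv_0_lt_compat; lra|].
    replace (3 * lyap_hi * sqdist s b Db * / (3 * lyap_hi)) with (sqdist s b Db) by (field; lra).
    exact Hsq. }
  pose proof (proj2 (V3_sqdist s b Db)); lra.
Qed.

Section Trajectory.

Variables (s b Dbar : R -> R).
Hypothesis Hsol : is_solution mu s_in sbar Dmin Dmax G1 G2 s b Dbar.

Lemma traj_right_cont : right_cont0 (fun t => V3 (s t) (b t) (Dbar t)).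
Proof.
  destruct Hsol as [Hrc _].
  assert (Ls : limit1_in s (fun t => 0 <= t) (s 0) 0)
    by (apply right_cont0_limit; exact (Hrc s (or_introl eq_refl))).
  assert (Lb : limit1_in b (fun t => 0 <= t) (b 0) 0)
    by (apply right_cont0_limit; exact (Hrc b (or_intror (or_introl eq_refl)))).
  assert (LD : limit1_in Dbar (fun t => 0 <= t) (Dbar 0) 0)
    by (apply right_cont0_limit; exact (Hrc Dbar (or_intror (or_intror eq_refl)))).
  apply right_cont0_limit; unfold V3, lyap.
  repeat first [ exact Ls | exact Lb | exact LD | apply limit_const | apply limit_minus
               | apply limit_plus | apply limit_pow2 | apply limit_mul ].
Qed.

Lemma traj_deriv (t : R) :
  0 < t -> derivable_pt_lim (fun t => V3 (s t) (b t) (Dbar t)) t (dV3 (s t) (b t) (Dbar t)).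
Proof.
  intros Ht; destruct Hsol as [_ Hder]; destruct (Hder t Ht) as [Hs [Hb HD]].
  apply (lyap_chain (fun y => s y - sbar) (fun y => Dbar y - D_eq) (fun y => s y + b y - s_in)).
  - eapply deriv_eq; [apply deriv_minus; [exact Hs | apply deriv_const]|].
    unfold field_s, Dcl; ring.
  - eapply deriv_eq; [apply deriv_minus; [exact HD | apply deriv_const]|].
    unfold field_D; ring.
  - eapply deriv_eq;
      [apply deriv_minus; [apply deriv_plus; [exact Hs | exact Hb] | apply deriv_const]|].
    unfold field_s, field_b, Dcl; ring.
Qed.

Lemma traj_V3_decay :
  V3 (s 0) (b 0) (Dbar 0) < Vmax ->
  forall t, 0 <= t -> V3 (s t) (b t) (Dbar t) <= V3 (s 0) (b 0) (Dbar 0) * exp (- decay_rate * t).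
Proof.
  intros H0.
  apply (lyapunov_exp_decay (fun t => V3 (s t) (b t) (Dbar t)) (fun t => dV3 (s t) (b t) (Dbar t))
           Vmax decay_rate).
  - exact traj_right_cont.
  - exact traj_deriv.
  - intros t _; pose proof lyap_lo_pos; pose proof (sqdist_nonneg (s t) (b t) (Dbar t)).
    pose proof (proj1 (V3_sqdist (s t) (b t) (Dbar t))); nra.
  - intros t _; apply V3_decrease.
  - pose proof decay_rate_pos; lra.
  - exact H0.
Qed.

Lemma traj_sqdist_decay :
  sqrt (sqdist (s 0) (b 0) (Dbar 0)) < init_radius ->
  forall t, 0 <= t ->
    sqdist (s t) (b t) (Dbar t)
      <= overshoot ^ 2 * exp (- decay_rate * t) * sqdist (s 0) (b 0) (Dbar 0)
    /\ V3 (s t) (b t) (Dbar t) < Vmax.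
Proof.
  intros Hinit t Ht; pose proof lyap_lo_pos; pose proof lyap_hi_pos.
  pose proof (init_in_sublevel _ _ _ Hinit) as HV0.
  pose proof (traj_V3_decay HV0 t Ht) as Hdecay.
  destruct (V3_sqdist (s 0) (b 0) (Dbar 0)) as [Hlo0 Hhi0].
  destruct (V3_sqdist (s t) (b t) (Dbar t)) as [Hlot _].
  pose proof (sqdist_nonneg (s 0) (b 0) (Dbar 0)).
  pose proof (exp_pos (- decay_rate * t)) as Hexp.
  assert (Hexp1 : exp (- decay_rate * t) <= 1)
    by (rewrite <- exp_0; pose proof decay_rate_pos; destruct (Req_dec t 0) as [-> | ?];
        [rewrite Rmult_0_r; lra | left; apply exp_increasing; nra]).
  assert (Hdecay' : V3 (s 0) (b 0) (Dbar 0) * exp (- decay_rate * t)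
                    <= 3 * lyap_hi * sqdist (s 0) (b 0) (Dbar 0) * exp (- decay_rate * t))
    by (apply Rmult_le_compat_r; lra).
  split.
  - (* lyap_lo |x(t)|^2 <= 3 V3(t) <= 3 V3(0) e <= 9 lyap_hi |x(0)|^2 e. *)
    assert (Hgain : overshoot ^ 2 = 9 * lyap_hi / lyap_lo)
      by (unfold overshoot; rewrite pow2_sqrt; [reflexivity | apply Rlt_le, Rdiv_lt_0_compat; lra]).
    rewrite Hgain; apply Rmult_le_reg_l with lyap_lo; [lra|].
    replace (lyap_lo * (9 * lyap_hi / lyap_lo * exp (- decay_rate * t) * sqdist (s 0) (b 0) (Dbar 0)))
      with (3 * (3 * lyap_hi * sqdist (s 0) (b 0) (Dbar 0) * exp (- decay_rate * t)))
      by (field; lra).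
    lra.
  - assert (0 <= V3 (s 0) (b 0) (Dbar 0)) by nra.
    nra.
Qed.

Lemma traj_dist_decay :
  sqrt (sqdist (s 0) (b 0) (Dbar 0)) < init_radius ->
  forall t, 0 <= t ->
    sqrt (sqdist (s t) (b t) (Dbar t))
    <= overshoot * exp (- (decay_rate / 2) * t) * sqrt (sqdist (s 0) (b 0) (Dbar 0)).
Proof.
  intros Hinit t Ht; destruct (traj_sqdist_decay Hinit t Ht) as [Hsq _].
  apply sqrt_le_scaled;
    [apply sqdist_nonneg | apply Rmult_le_pos; [apply sqrt_pos | left; apply exp_pos] |].
  replace ((overshoot * exp (- (decay_rate / 2) * t)) ^ 2)
    with (overshoot ^ 2 * exp (- decay_rate * t)); [exact Hsq|].
  replace (- decay_rate * t) with (- (decay_rate / 2) * t + - (decay_rate / 2) * t) by field.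
  rewrite exp_plus; ring.
Qed.

(* The dilution rate converges, since it is unsaturated along the solution. *)
Lemma traj_dilution_close :
  sqrt (sqdist (s 0) (b 0) (Dbar 0)) < init_radius ->
  forall t, 0 <= t ->
    Rabs (Dcl (s t) (Dbar t) - D_eq) <= (1 + G1) * sqrt (sqdist (s t) (b t) (Dbar t)).
Proof.
  intros Hinit t Ht; destruct (traj_sqdist_decay Hinit t Ht) as [_ HV].
  destruct (sublevel_small _ _ _ HV) as [He [Hd _]].
  destruct (coords_le_dist (s t) (b t) (Dbar t)) as [Hes Hds].
  rewrite (dilution_unsaturated _ _ He Hd).
  replace (D_eq + (Dbar t - D_eq) - G1 * (s t - sbar) - D_eq)
    with ((Dbar t - D_eq) + - (G1 * (s t - sbar))) by ring.
  eapply Rle_trans; [apply Rabs_triang|].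
  rewrite Rabs_Ropp, Rabs_mult, (Rabs_right G1) by lra.
  assert (G1 * Rabs (s t - sbar) <= G1 * sqrt (sqdist (s t) (b t) (Dbar t)))
    by (apply Rmult_le_compat_l; lra).
  lra.
Qed.

End Trajectory.

Lemma neighbourhood_stable : closed_loop_stable s_in mu sbar Dmin Dmax G1 G2.
Proof.
  pose proof lyap_lo_pos; pose proof lyap_hi_pos; pose proof decay_rate_pos.
  assert (HVmax : 0 < Vmax) by (unfold Vmax; apply Rmult_lt_0_compat; [lra | apply pow_lt; lra]).
  exists init_radius, overshoot, (decay_rate / 2); split; [|split; [|split]].
  - apply sqrt_lt_R0, Rdiv_lt_0_compat; lra.
  - apply sqrt_lt_R0, Rdiv_lt_0_compat; lra.
  - lra.
  - intros s b Dbar Hsol Hinit.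
    change (sqrt (sqdist (s 0) (b 0) (Dbar 0)) < init_radius) in Hinit.
    pose proof (traj_dist_decay s b Dbar Hsol Hinit) as Hdist.
    assert (HC : 0 <= overshoot * sqrt (sqdist (s 0) (b 0) (Dbar 0)))
      by (apply Rmult_le_pos; apply sqrt_pos).
    split; [exact Hdist|]; split; [|split].
    + apply (tends_of_exp_bound _ _ _ (decay_rate / 2) HC ltac:(lra)); intros t Ht.
      specialize (Hdist t Ht); pose proof (proj1 (coords_le_dist (s t) (b t) (Dbar t))); lra.
    + apply (tends_of_exp_bound _ _ _ (decay_rate / 2) HC ltac:(lra)); intros t Ht.
      specialize (Hdist t Ht); pose proof (proj2 (coords_le_dist (s t) (b t) (Dbar t))).
      change (mu sbar) with D_eq; lra.
    + apply (tends_of_exp_bound _ _ ((1 + G1) * (overshoot * sqrt (sqdist (s 0) (b 0) (Dbar 0))))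
               (decay_rate / 2) ltac:(apply Rmult_le_pos; lra) ltac:(lra)); intros t Ht.
      specialize (Hdist t Ht); pose proof (traj_dilution_close s b Dbar Hsol Hinit t Ht).
      assert ((1 + G1) * sqrt (sqdist (s t) (b t) (Dbar t))
              <= (1 + G1) * (overshoot * exp (- (decay_rate / 2) * t)
                             * sqrt (sqdist (s 0) (b 0) (Dbar 0))))
        by (apply Rmult_le_compat_l; lra).
      unfold Dcl in *; change (mu sbar) with D_eq; lra.
Qed.

End Neighbourhood.

Lemma admissible_radius : exists eps rho : R,
  eps <= 1 /\ eps * coef_size <= omega_lin / 2 /\ 0 < rho /\ rho <= eps /\
  (1 + G1) * rho <= D_eq - Dmin /\ (1 + G1) * rho <= Dmax - D_eq /\
  (forall y, Rabs (y - sbar) < rho ->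
     exists ph, Rabs ph <= eps /\ mu y = D_eq + (p + ph) * (y - sbar)).
Proof.
  pose proof omega_lin_pos.
  assert (Hsize : 0 <= coef_size)
    by (unfold coef_size; pose proof (l1_nonneg coef1); pose proof (l1_nonneg coef2);
        pose proof (l1_nonneg coef3); lra).
  set (eps := Rmin 1 (omega_lin / (2 * (coef_size + 1)))).
  assert (Heps0 : 0 < eps) by (apply Rmin_glb_lt; [lra | apply Rdiv_lt_0_compat; lra]).
  assert (Heps_size : eps * coef_size <= omega_lin / 2).
  { apply Rle_trans with (omega_lin / (2 * (coef_size + 1)) * (coef_size + 1));
      [apply Rmult_le_compat; [lra | lra | apply Rmin_r | lra] | right; field; lra]. }
  destruct (derivable_linear_expansion mu sbar p Hmu_diff eps Heps0) as [del [Hdel Hexp]].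
  set (gap := Rmin (D_eq - Dmin) (Dmax - D_eq) / (1 + G1)).
  assert (Hgap : 0 < gap)
    by (apply Rdiv_lt_0_compat; [apply Rmin_glb_lt; unfold D_eq; lra | lra]).
  assert (Hgap_le : (1 + G1) * gap <= D_eq - Dmin /\ (1 + G1) * gap <= Dmax - D_eq).
  { unfold gap; replace ((1 + G1) * (Rmin (D_eq - Dmin) (Dmax - D_eq) / (1 + G1)))
      with (Rmin (D_eq - Dmin) (Dmax - D_eq)) by (field; lra).
    split; [apply Rmin_l | apply Rmin_r]. }
  set (rho := Rmin eps (Rmin del gap)).
  assert (Hrho : rho <= eps /\ rho <= del /\ rho <= gap).
  { pose proof (Rmin_l eps (Rmin del gap)); pose proof (Rmin_r eps (Rmin del gap)).
    pose proof (Rmin_l del gap); pose proof (Rmin_r del gap); unfold rho; lra. }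
  assert (Hsat : (1 + G1) * rho <= (1 + G1) * gap) by (apply Rmult_le_compat_l; lra).
  exists eps, rho; split; [apply Rmin_l|]; split; [exact Heps_size|].
  split; [unfold rho; apply Rmin_glb_lt; [lra | apply Rmin_glb_lt; lra]|]; split; [lra|].
  split; [lra|]; split; [lra|].
  intros y Hy; apply Hexp; lra.
Qed.

Lemma chemostat_stable : closed_loop_stable s_in mu sbar Dmin Dmax G1 G2.
Proof.
  destruct admissible_radius as (eps & rho & Heps1 & Hsize & Hrho0 & Hrho_eps & Hlo & Hhi & Hmu).
  exact (neighbourhood_stable eps rho Heps1 Hsize Hrho0 Hrho_eps Hlo Hhi Hmu).
Qed.

End Chemostat.

(* Proposition 2: the hypotheses of the section follow from those of the paper,
   with p = dmu sbar; C^1 regularity is only used through the derivative at sbar. *)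
Theorem proposition2
  (s_in : R) (mu dmu : R -> R) (sbar Dmin Dmax G1 G2 : R)
  (Hsin : 0 < s_in)
  (Hmu_C1 : C1_on mu dmu 0 s_in)
  (Hmu_nonneg : forall x, 0 <= x <= s_in -> 0 <= mu x)
  (Hmu0 : mu 0 = 0)
  (Hsbar : 0 < sbar < s_in)
  (HDmin : 0 < Dmin) (HDlo : Dmin < mu sbar) (HDhi : mu sbar < Dmax)
  (HG1 : 0 < G1) (HG2 : 0 < G2) (HG1mu : G1 > - dmu sbar) :
  exists delta M lam : R, 0 < delta /\ 0 < M /\ 0 < lam /\
    forall s b Dbar : R -> R,
      is_solution mu s_in sbar Dmin Dmax G1 G2 s b Dbar ->
      dist3 (s 0) (b 0) (Dbar 0) sbar (s_in - sbar) (mu sbar) < delta ->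
      (forall t, 0 <= t ->
         dist3 (s t) (b t) (Dbar t) sbar (s_in - sbar) (mu sbar)
         <= M * exp (- lam * t) *
            dist3 (s 0) (b 0) (Dbar 0) sbar (s_in - sbar) (mu sbar)) /\
      tends_to_infty s sbar /\
      tends_to_infty Dbar (mu sbar) /\
      tends_to_infty (fun t => Dfb Dmin Dmax G1 sbar (s t) (Dbar t)) (mu sbar).
Proof.
  destruct Hmu_C1 as [_ [_ Hmu_diff]].
  apply (chemostat_stable s_in mu sbar Dmin Dmax G1 G2 (dmu sbar)).
  all: try lra.
  apply Hmu_diff; lra.
Qed.
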